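(* Let $k$ be a field, $(X,\leq)$ a locally finite preordered set and $C=IC(X)$. Then the set $\{e_{x,y}\mid x,y\in X,\ x\leq y\}$ is a coradical basis of $C$.
   Context: $(X,\leq)$ is a reflexive transitive relation with all intervals $[x,y]$ finite. $IC(X)$ has $k$-basis $\{e_{x,y}\mid x\leq y\}$, $\Delta(e_{x,y})=\sum_{x\leq z\leq y}e_{x,z}\otimes e_{z,y}$, $\varepsilon(e_{x,y})=\delta_{x,y}$. The coradical $C_0$ is the sum of all simple subcoalgebras; $U\wedge V=\Delta^{-1}(U\otimes C+C\otimes V)$ and $C_n=C_0\wedge C_{n-1}$ for $n\geq 1$. A coradical basis of $C$ is a $k$-basis $\mathcal B$ with $\mathcal B\cap C_n$ a basis of $C_n$ for every $n$. *)

(* Concrete model of the incidence coalgebra IC(X) over a field k: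
   an element of C = IC(X) is identified with its coordinate function X*X -> k
   w.r.t. the basis {e_{x,y} | x <= y} (finite support contained in {(x,y) | x <= y});
   an element of C (x) C is identified with its coordinate function on
   (X*X)*(X*X) w.r.t. the basis {e_{x,y} (x) e_{z,w}}. *)
From mathcomp Require Import all_boot all_algebra.
Set Implicit Arguments. Unset Strict Implicit. Unset Printing Implicit Defensive.
Import GRing.Theory.
Local Open Scope ring_scope.

Section LinAlg.
Variables (k : fieldType) (I : Type).

Definition lincomb (n : nat) (a : 'I_n -> k) (f : 'I_n -> I -> k) : I -> k :=
  fun p => \sum_(i < n) a i * f i p.

Definition zerov : I -> k := fun _ => 0.

Definition subspace (W : (I -> k) -> Prop) : Prop :=
  [/\ W zerov,
      (forall u v, W u -> W v -> W (fun p => u p + v p)) &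
      (forall (c : k) u, W u -> W (fun p => c * u p))].

Definition subset (A B : (I -> k) -> Prop) : Prop := forall v, A v -> B v.

Definition span (S : (I -> k) -> Prop) : (I -> k) -> Prop :=
  fun v => exists n (a : 'I_n -> k) (f : 'I_n -> I -> k),
    (forall i, S (f i)) /\ v = lincomb a f.

Definition lin_indep (S : (I -> k) -> Prop) : Prop :=
  forall n (a : 'I_n -> k) (f : 'I_n -> I -> k),
    injective f -> (forall i, S (f i)) -> lincomb a f = zerov ->
    forall i, a i = 0.

Definition basis_of (W B : (I -> k) -> Prop) : Prop :=
  [/\ subset B W, lin_indep B & subset W (span B)].

Definition ssum (A B : (I -> k) -> Prop) : (I -> k) -> Prop :=
  fun w => exists u v, A u /\ B v /\ w = (fun p => u p + v p).

Definition inter (A B : (I -> k) -> Prop) : (I -> k) -> Prop :=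
  fun v => A v /\ B v.
End LinAlg.

Section Incidence.
Variables (k : fieldType) (X : eqType) (le : rel X).

Definition idx_ok (p : X * X) : bool := le p.1 p.2.

Definition finsupp (I : eqType) (dom : I -> bool) (f : I -> k) : Prop :=
  (forall i, f i != 0 -> dom i) /\ (exists s : seq I, forall i, f i != 0 -> i \in s).

Definition ICspace : (X * X -> k) -> Prop := finsupp idx_ok.

Definition ICtens_space : ((X * X) * (X * X) -> k) -> Prop :=
  finsupp (fun pq : (X * X) * (X * X) => idx_ok pq.1 && idx_ok pq.2).

Definition e_ (x y : X) : X * X -> k := fun p => if p == (x, y) then 1 else 0.

Definition tens (u v : X * X -> k) : (X * X) * (X * X) -> k :=
  fun pq => u pq.1 * v pq.2.

Definition tensS (U V : (X * X -> k) -> Prop) : ((X * X) * (X * X) -> k) -> Prop :=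
  span (fun t => exists u v, U u /\ V v /\ t = tens u v).

(* comultiplication: Delta(e_{x,y}) = sum_{x<=z<=y} e_{x,z} (x) e_{z,y}, extended
   linearly; coefficient of e_{a,b} (x) e_{c,d} in Delta(f) is [b = c, a<=b<=d] f(a,d) *)
Definition Delta (f : X * X -> k) : (X * X) * (X * X) -> k :=
  fun pq => let: ((a, b), (c, d)) := pq in
            if (b == c) && le a b && le b d then f (a, d) else 0.

Definition subcoalgebra (D : (X * X -> k) -> Prop) : Prop :=
  [/\ subspace D, subset D ICspace &
      forall d, D d -> tensS D D (Delta d)].

Definition simple_subcoalgebra (D : (X * X -> k) -> Prop) : Prop :=
  [/\ subcoalgebra D, (exists d, D d /\ d <> @zerov k (X * X)) &
      forall E, subcoalgebra E -> subset E D ->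
        (forall d, E d -> d = @zerov k (X * X)) \/ subset D E].

Definition coradical : (X * X -> k) -> Prop :=
  span (fun c => exists D, simple_subcoalgebra D /\ D c).

Definition wedge (U V : (X * X -> k) -> Prop) : (X * X -> k) -> Prop :=
  fun c => ICspace c /\ ssum (tensS U ICspace) (tensS ICspace V) (Delta c).

Fixpoint corad_filt (n : nat) : (X * X -> k) -> Prop :=
  match n with
  | 0 => coradical
  | n'.+1 => wedge coradical (corad_filt n')
  end.

Definition coradical_basis (B : (X * X -> k) -> Prop) : Prop :=
  basis_of ICspace B /\ forall n, basis_of (corad_filt n) (inter B (corad_filt n)).

Definition e_basis : (X * X -> k) -> Prop :=
  fun f => exists x y, le x y /\ f = e_ x y.
End Incidence.

(* Since
   Delta(e_{a,b}) = sum_{a<=z<=b} e_{a,z} (x) e_{z,b}, the slices of Delta d lie in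
   every subcoalgebra D containing d; taking slices twice shows that D contains every
   e_{a,b} with d(a,b) <> 0, and with e_{a,b} every e_{a,z} and e_{z,b} for a <= z <= b.
   Hence the simple subcoalgebras are the blocks spanned by the e_{a,b} with a and b
   in one equivalence class of <=, C_0 consists of the elements supported on the pairs
   with b <= a, and by induction C_n consists of the elements supported on a set of
   pairs P_n defined by recursion on n. A subspace described by a support condition
   is spanned by the e_{a,b} it contains, so every C_n has a basis of such vectors. *)
From Pilot Require Import Defs.
From mathcomp Require Import all_boot ssralg.
From Stdlib Require Import FunctionalExtensionality Classical.
Set Implicit Arguments. Unset Strict Implicit. Unset Printing Implicit Defensive.
Import GRing.Theory.
Local Open Scope ring_scope.

Section LinearCombinations.
Variables (k : fieldType) (I : Type).
Implicit Types (S W : (I -> k) -> Prop) (s : seq (k * (I -> k))).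

Fixpoint all_vecs S s : Prop :=
  if s is x :: s' then S x.2 /\ all_vecs S s' else True.

Definition lincomb_seq s : I -> k := fun p => \sum_(x <- s) x.1 * x.2 p.

Lemma lincomb_seq_nil : lincomb_seq [::] = @zerov k I.
Proof. by apply: functional_extensionality => p; rewrite /lincomb_seq big_nil. Qed.

Lemma all_vecs_nth S s i :
  all_vecs S s -> (i < size s)%N -> S (nth (0, @zerov k I) s i).2.
Proof.
elim: s i => [|x s IH] [|i] //=; first by case.
by case=> _ H; rewrite ltnS; apply: IH.
Qed.

Lemma all_vecs_map S (J : eqType) (r : seq J) (g : J -> k * (I -> k)) :
  (forall j, j \in r -> S (g j).2) -> all_vecs S (map g r).
Proof.
elim: r => [|j r IH] //= H; split; first by apply: H; rewrite mem_head.
by apply: IH => j' j'r; apply: H; rewrite inE j'r orbT.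
Qed.

Lemma span_lincomb_seq S s : all_vecs S s -> span S (lincomb_seq s).
Proof.
move=> H; exists (size s), (fun i => (nth (0, @zerov k I) s i).1),
  (fun i => (nth (0, @zerov k I) s i).2); split.
  by move=> i; apply: all_vecs_nth.
apply: functional_extensionality => p.
by rewrite /lincomb_seq /lincomb (big_nth (0, @zerov k I)) big_mkord.
Qed.

Lemma span_lincomb_seqP S v : span S v -> exists s, all_vecs S s /\ v = lincomb_seq s.
Proof.
case=> n [a [f [Hf ->]]]; exists [seq (a i, f i) | i <- index_enum 'I_n]; split.
  by elim: (index_enum 'I_n) => [|i r IH] //=.
by apply: functional_extensionality => p; rewrite /lincomb_seq big_map.
Qed.

Lemma subspace_lincomb_seq W s : subspace W -> all_vecs W s -> W (lincomb_seq s).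
Proof.
case=> W0 WD WZ; elim: s => [|x s IH] /=; first by rewrite lincomb_seq_nil.
case=> Wx Ws.
have -> : lincomb_seq (x :: s) = (fun p => x.1 * x.2 p + lincomb_seq s p).
  by apply: functional_extensionality => p; rewrite /lincomb_seq big_cons.
exact: WD (WZ _ _ Wx) (IH Ws).
Qed.

Lemma span_subspace S : subspace (span S).
Proof.
split.
- by rewrite -lincomb_seq_nil; apply: span_lincomb_seq.
- move=> u v /span_lincomb_seqP [s1 [H1 ->]] /span_lincomb_seqP [s2 [H2 ->]].
  have -> : (fun p => lincomb_seq s1 p + lincomb_seq s2 p) = lincomb_seq (s1 ++ s2).
    by apply: functional_extensionality => p; rewrite /lincomb_seq big_cat.
  apply: span_lincomb_seq; elim: s1 H1 => [|x s1 IH] //= [Sx Ss1].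
  by split; last apply: IH.
- move=> c u /span_lincomb_seqP [s [H ->]].
  have -> : (fun p => c * lincomb_seq s p) = lincomb_seq [seq (c * x.1, x.2) | x <- s].
    apply: functional_extensionality => p; rewrite /lincomb_seq big_map mulr_sumr.
    by apply: eq_bigr => x _; rewrite mulrA.
  by apply: span_lincomb_seq; elim: s H => [|x s IH] //= [Sx Ss]; split; last apply: IH.
Qed.

Lemma span_mem S v : S v -> span S v.
Proof.
move=> Sv; have -> : v = lincomb_seq [:: (1, v)].
  by apply: functional_extensionality => p; rewrite /lincomb_seq big_seq1 mul1r.
exact: span_lincomb_seq.
Qed.

Lemma span_subset_subspace W S : subspace W -> Defs.subset S W -> Defs.subset (span S) W.
Proof.
move=> sW SW v /span_lincomb_seqP [s [Ss ->]]; apply: subspace_lincomb_seq => //.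
by elim: s Ss => [|x s IH] //= [Sx Ss]; split; [apply: SW | apply: IH].
Qed.

Lemma subspace_scale W c u : subspace W -> W u -> W (fun p => c * u p).
Proof. by case=> _ _; apply. Qed.

Lemma subspace_big W (J : eqType) (r : seq J) (P : pred J) (F : J -> I -> k) :
  subspace W -> (forall j, j \in r -> P j -> W (F j)) ->
  W (fun p => \sum_(j <- r | P j) F j p).
Proof.
case=> W0 WD WZ; elim: r => [|j r IH] H.
  have -> : (fun p => \sum_(j <- [::] | P j) F j p) = @zerov k I.
    by apply: functional_extensionality => p; rewrite big_nil.
  by [].
have Wr : W (fun p => \sum_(j' <- r | P j') F j' p).
  by apply: IH => j' j'r; apply: H; rewrite inE j'r orbT.
case Pj: (P j).
  have -> : (fun p => \sum_(j' <- j :: r | P j') F j' p) =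
            (fun p => F j p + \sum_(j' <- r | P j') F j' p).
    by apply: functional_extensionality => p; rewrite big_cons Pj.
  by apply: WD Wr; apply: H; rewrite ?mem_head.
have -> : (fun p => \sum_(j' <- j :: r | P j') F j' p) =
          (fun p => \sum_(j' <- r | P j') F j' p).
  by apply: functional_extensionality => p; rewrite big_cons Pj.
by [].
Qed.
End LinearCombinations.

Lemma span_comp (k : fieldType) (I J : Type) (S : (I -> k) -> Prop) (W : (J -> k) -> Prop)
    (g : J -> I) (t : I -> k) :
  subspace W -> (forall f, S f -> W (f \o g)) -> span S t -> W (t \o g).
Proof.
move=> sW Hg /span_lincomb_seqP [s [Ss ->]].
have -> : lincomb_seq s \o g = lincomb_seq [seq (x.1, x.2 \o g) | x <- s].
  by apply: functional_extensionality => p; rewrite /lincomb_seq big_map.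
by apply: subspace_lincomb_seq => //; elim: s Ss => [|x s IH] //= [Sx Ss]; split; auto.
Qed.

Lemma span_eq0_at (k : fieldType) (I : Type) (S : (I -> k) -> Prop) v p :
  (forall g, S g -> g p = 0) -> span S v -> v p = 0.
Proof.
move=> H /span_lincomb_seqP [s [Ss ->]]; rewrite /lincomb_seq.
elim: s Ss => [|x s IH] /=; first by rewrite big_nil.
by case=> Sx Ss; rewrite big_cons IH // H // mulr0 addr0.
Qed.

Lemma big_seq_only (k : fieldType) (J : eqType) (r : seq J) (P : pred J) j (F : J -> k) :
  uniq r -> (forall i, i \in r -> P i -> i != j -> F i = 0) ->
  \sum_(i <- r | P i) F i = if (j \in r) && P j then F j else 0.
Proof.
move=> ur H; rewrite big_mkcond.
case: ifP => [/andP [jr Pj]|Hj].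
  rewrite (bigD1_seq j) //= Pj big1_seq ?addr0 // => i /andP [ij ir].
  by case: ifP => // Pi; apply: H.
rewrite big1_seq // => i /andP [_ ir].
case: ifP => // Pi; apply: H => //; apply/negP => /eqP ij; subst i.
by rewrite ir Pi in Hj.
Qed.

Section IncidenceCoalgebra.
Variables (k : fieldType) (X : eqType) (le : rel X).
Hypothesis le_refl : forall x, le x x.
Hypothesis le_trans : forall x y z, le x y -> le y z -> le x z.
Hypothesis loc_fin : forall x y, exists s : seq X, forall z, le x z && le z y -> z \in s.

Notation IC := (@ICspace k X le).
Notation e := (@e_ k X).
Implicit Types (c d : X * X -> k) (D U V : (X * X -> k) -> Prop).

Lemma IC_le c p : IC c -> c p != 0 -> le p.1 p.2.
Proof. by case=> H _ /H. Qed.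

Lemma e_eq0 a b q : e a b q != 0 -> q = (a, b).
Proof. by rewrite /e_; case: (q =P (a, b)) => [-> //|]; rewrite eqxx. Qed.

Lemma e_id a b : e a b (a, b) = 1.
Proof. by rewrite /e_ eqxx. Qed.

Lemma e_neq0 a b : e a b <> @zerov k (X * X).
Proof. by move/(congr1 (fun f => f (a, b))) => /eqP; rewrite e_id oner_eq0. Qed.

Lemma IC_e a b : le a b -> IC (e a b).
Proof.
move=> lab; split; first by move=> q /e_eq0 ->.
by exists [:: (a, b)] => q /e_eq0 ->; rewrite mem_seq1.
Qed.

Definition supp_in (Q : X * X -> Prop) : (X * X -> k) -> Prop :=
  fun c => IC c /\ forall p, c p != 0 -> Q p.

Lemma supp_in_e (Q : X * X -> Prop) a b : le a b -> Q (a, b) -> supp_in Q (e a b).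
Proof. by move=> lab Qab; split; [apply: IC_e | move=> q /e_eq0 ->]. Qed.

Lemma supp_in_subspace Q : subspace (supp_in Q).
Proof.
have nz_add (u v : X * X -> k) p : u p + v p != 0 -> u p != 0 \/ v p != 0.
  by case: (eqVneq (u p) 0) => [->|]; [rewrite add0r; right | left].
have nz_scale (c : k) (u : X * X -> k) p : c * u p != 0 -> u p != 0.
  by apply: contraNN => /eqP ->; rewrite mulr0.
split.
- by split; [split => [p|]; rewrite /zerov ?eqxx //; exists [::] | move=> p; rewrite eqxx].
- move=> u v [[Hu [su Hsu]] Qu] [[Hv [sv Hsv]] Qv].
  split; first split; first by move=> p /nz_add [/Hu|/Hv].
  + by exists (su ++ sv) => p /nz_add [/Hsu|/Hsv]; rewrite mem_cat => ->; rewrite ?orbT.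
  + by move=> p /nz_add [/Qu|/Qv].
- move=> c u [[Hu [su Hsu]] Qu].
  by split; first split; [move=> p /nz_scale/Hu | exists su => p /nz_scale/Hsu |
    move=> p /nz_scale/Qu].
Qed.

Lemma IC_expand c : IC c -> exists s : seq (X * X),
  [/\ uniq s, (forall p, p \in s -> c p != 0), (forall p, c p != 0 -> p \in s) &
      c = lincomb_seq [seq (c p, e p.1 p.2) | p <- s]].
Proof.
case=> _ [s0 Hs0]; set s := undup [seq p <- s0 | c p != 0].
have ms p : (p \in s) = (c p != 0).
  by rewrite mem_undup mem_filter; case: (eqVneq (c p) 0) => //= H; rewrite Hs0 // H.
exists s; split; first exact: undup_uniq.
- by move=> p; rewrite ms.
- by move=> p; rewrite ms.
apply: functional_extensionality => q; rewrite /lincomb_seq big_map.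
rewrite (big_seq_only (j := q)) ?undup_uniq //=.
  rewrite andbT ms; case: eqP => [->|] //.
  by rewrite /e_ -surjective_pairing eqxx mulr1.
move=> p _ _ pq; rewrite /e_ -surjective_pairing.
by case: eqP => [qp|]; [rewrite qp eqxx in pq | rewrite mulr0].
Qed.

Lemma e_basis_lin_indep : lin_indep (@e_basis k X le).
Proof.
move=> n a f inj_f Hf /(congr1 (fun g => g _)) combE i.
case: (Hf i) => x [y [_ fi]]; move: (combE (x, y)); rewrite /lincomb /zerov.
rewrite (bigD1 i) //= fi e_id mulr1 big1 ?addr0 // => j ji.
case: (Hf j) => x' [y' [_ fj]]; rewrite fj /e_; case: eqP => [[ex ey]|]; last by rewrite mulr0.
have /inj_f ij : f j = f i by rewrite fi fj ex ey.
by rewrite ij eqxx in ji.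
Qed.

Lemma basis_of_e_supp W B :
  Defs.subset W IC -> Defs.subset B W -> Defs.subset B (@e_basis k X le) ->
  (forall c, W c -> forall p, c p != 0 -> B (e p.1 p.2)) ->
  basis_of W B.
Proof.
move=> WI BW Be Hsupp; split => //.
  by move=> n a f inj_f Hf; apply: e_basis_lin_indep => // i; apply: Be.
move=> c Wc; case: (IC_expand (WI _ Wc)) => s [_ Hs _ ->].
by apply: span_lincomb_seq; apply: all_vecs_map => p /Hs; apply: Hsupp.
Qed.

Lemma tensS_slice_r U V t p : subspace V -> tensS U V t -> V (fun r => t (p, r)).
Proof.
move=> sV Ht; apply: (span_comp (g := fun r => (p, r)) sV _ Ht) => _ [u [v [_ [Vv ->]]]].
exact: (subspace_scale (u p) sV Vv).
Qed.

Lemma tensS_slice_l U V t q : subspace U -> tensS U V t -> U (fun l => t (l, q)).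
Proof.
move=> sU Ht; apply: (span_comp (g := fun l => (l, q)) sU _ Ht) => _ [u [v [Uu [_ ->]]]].
have -> : tens u v \o (fun l => (l, q)) = fun l => v q * u l.
  by apply: functional_extensionality => l; rewrite /tens /= mulrC.
exact: subspace_scale.
Qed.

Lemma tensS_eq0_l U V t a b : (forall u, U u -> u a = 0) -> tensS U V t -> t (a, b) = 0.
Proof. by move=> H; apply: span_eq0_at => _ [u [v [Uu [_ ->]]]]; rewrite /tens /= H // mul0r. Qed.

Lemma tensS_eq0_r U V t a b : (forall v, V v -> v b = 0) -> tensS U V t -> t (a, b) = 0.
Proof. by move=> H; apply: span_eq0_at => _ [u [v [_ [Vv ->]]]]; rewrite /tens /= H // mulr0. Qed.

Lemma interval_cover (s : seq (X * X)) : exists T : seq X,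
  uniq T /\ forall p z, p \in s -> le p.1 z -> le z p.2 -> z \in T.
Proof.
elim: s => [|p s [T [_ HT]]]; first by exists [::].
case: (loc_fin p.1 p.2) => s1 Hs1; exists (undup (s1 ++ T)); split; first exact: undup_uniq.
move=> q z; rewrite inE mem_undup mem_cat => /orP [/eqP ->|qs] l1 l2.
  by rewrite Hs1 // l1 l2.
by rewrite (HT q z qs l1 l2) orbT.
Qed.

Lemma Delta_expand c : IC c -> exists s (T : seq X),
  (forall p, p \in s -> c p != 0) /\
  Delta le c = fun pq => \sum_(p <- s) \sum_(z <- T | le p.1 z && le z p.2)
                          c p * tens (e p.1 z) (e z p.2) pq.
Proof.
move=> Ic; case: (IC_expand Ic) => s [us Hs1 Hs2 _].
case: (interval_cover s) => T [uT HT]; exists s, T; split => //.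
apply: functional_extensionality => -[[x y] [y' w]].
rewrite /Delta (big_seq_only (P := xpredT) (j := (x, w))) //=; last first.
  move=> p _ _ pxw; rewrite big1 // => z _; rewrite /tens /e_ !xpair_eqE /=.
  case: (eqVneq x p.1) => [ex|]; case: (eqVneq w p.2) => [ew|];
    rewrite ?andbF /= ?mul0r ?mulr0 //.
  by rewrite ex ew -surjective_pairing eqxx in pxw.
case: (boolP ((x, w) \in s)) => xw; last first.
  have -> : c (x, w) = 0 by apply/eqP; apply: contraNT xw; apply: Hs2.
  by case: ifP.
rewrite andbT (big_seq_only (j := y)) //; last first.
  move=> z _ _ zy; rewrite /tens /e_ !xpair_eqE eq_sym (negbTE zy) /=.
  by rewrite andbF mul0r mulr0.
case lxy: (le x y); case lyw: (le y w); rewrite ?andbF ?andbT //=.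
rewrite (HT (x, w) y xw lxy lyw) /tens /e_ !xpair_eqE !eqxx /= mul1r eq_sym.
by case: ifP; rewrite ?mulr1 ?mulr0.
Qed.

Lemma tensS_Delta_part U V c (s : seq (X * X)) (T : seq X) (Q : X * X -> X -> bool) :
  (forall p z, p \in s -> Q p z -> U (e p.1 z) /\ V (e z p.2)) ->
  tensS U V (fun pq => \sum_(p <- s) \sum_(z <- T | Q p z) c p * tens (e p.1 z) (e z p.2) pq).
Proof.
move=> H; apply: (subspace_big (P := xpredT)); first exact: span_subspace.
move=> p ps _; apply: subspace_big; first exact: span_subspace.
move=> z _ Qpz; apply: subspace_scale; first exact: span_subspace.
by apply: span_mem; have [Ue Ve] := H p z ps Qpz; exists (e p.1 z), (e z p.2).
Qed.

Section Subcoalgebra.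
Variable D : (X * X -> k) -> Prop.
Hypothesis subcoD : subcoalgebra le D.

Lemma subcoalgebra_subspace : subspace D.
Proof. by case: subcoD. Qed.

Lemma subcoalgebra_IC d : D d -> IC d.
Proof. by case: subcoD => _ + _; apply. Qed.

Lemma subcoalgebra_slice_r d p : D d -> D (fun r => Delta le d (p, r)).
Proof. by case: subcoD => sD _ HD Dd; apply: tensS_slice_r (HD _ Dd). Qed.

Lemma subcoalgebra_slice_l d q : D d -> D (fun l => Delta le d (l, q)).
Proof. by case: subcoD => sD _ HD Dd; apply: tensS_slice_l (HD _ Dd). Qed.

(* e_{a,b} is d(a,b)^-1 times the e_{b,b}-slice of Delta of the e_{a,a}-slice of Delta d. *)
Lemma subcoalgebra_e_supp d p : D d -> d p != 0 -> D (e p.1 p.2).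
Proof.
case: p => a b Dd /= dab; have /= lab := IC_le (subcoalgebra_IC Dd) dab.
have -> : e a b = fun q => (d (a, b))^-1 *
   (fun l => Delta le (fun r => Delta le d ((a, a), r)) (l, (b, b))) q.
  apply: functional_extensionality => -[x y]; rewrite /Delta /e_ xpair_eqE /=.
  case: (eqVneq x a) => [->|xa]; case: (eqVneq y b) => [->|yb];
    rewrite ?eqxx ?le_refl ?lab /= ?mulr0 ?mulVf //.
  by case: ifP => _; rewrite mulr0.
apply: subspace_scale subcoalgebra_subspace _.
exact: subcoalgebra_slice_l (subcoalgebra_slice_r _ Dd).
Qed.

Lemma subcoalgebra_e_interval a b z : D (e a b) -> le a z -> le z b -> D (e z b) /\ D (e a z).
Proof.
move=> Dab laz lzb; split.
  have -> : e z b = fun r => Delta le (e a b) ((a, z), r).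
    apply: functional_extensionality => -[y d]; rewrite /Delta /e_ !xpair_eqE /= eqxx laz /=.
    by case: (eqVneq y z) => _; case: (eqVneq d b) => [->|_] //=; rewrite ?lzb //; case: ifP.
  exact: subcoalgebra_slice_r.
have -> : e a z = fun l => Delta le (e a b) (l, (z, b)).
  apply: functional_extensionality => -[x y]; rewrite /Delta /e_ !xpair_eqE /= eqxx andbT.
  by case: (eqVneq x a) => [->|_]; case: (eqVneq y z) => [->|_] //=; rewrite ?laz ?lzb //;
    case: ifP.
exact: subcoalgebra_slice_l.
Qed.
End Subcoalgebra.

Definition equiv x y := le x y /\ le y x.

Definition block x := supp_in (fun p => equiv x p.1 /\ equiv x p.2).

Lemma block_e x a b : equiv x a -> equiv x b -> block x (e a b).
Proof. by move=> [xa ax] [xb bx]; apply: supp_in_e => //; apply: le_trans ax xb. Qed.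

Lemma block_subset D x a b :
  subcoalgebra le D -> D (e a b) -> equiv x a -> equiv x b -> Defs.subset (block x) D.
Proof.
move=> sD Dab [xa ax] [xb bx] c [Ic Hc]; case: (IC_expand Ic) => s [_ Hs _ ->].
apply: subspace_lincomb_seq; first exact: subcoalgebra_subspace.
apply: all_vecs_map => p /Hs /Hc [[x1 p1x] [x2 p2x]] /=.
have [Dp1b _] := subcoalgebra_e_interval sD Dab (le_trans ax x1) (le_trans p1x xb).
by case: (subcoalgebra_e_interval sD Dp1b (le_trans p1x x2) (le_trans p2x xb)).
Qed.

Lemma block_subcoalgebra x : subcoalgebra le (block x).
Proof.
split; [exact: supp_in_subspace | by move=> c [] |].
move=> c [Ic Hc]; case: (Delta_expand Ic) => s [T [Hs ->]].
apply: tensS_Delta_part => p z ps /andP [l1 l2].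
have [[xp1 p1x] [xp2 p2x]] := Hc p (Hs p ps).
have xz : equiv x z by split; [apply: le_trans xp1 l1 | apply: le_trans l2 p2x].
by split; apply: block_e.
Qed.

Lemma block_simple x : simple_subcoalgebra le (block x).
Proof.
split; first exact: block_subcoalgebra.
  by exists (e x x); split; [apply: block_e | apply: e_neq0].
move=> F sF Fx.
case: (classic (exists d p, F d /\ d p != 0)) => [[d [p [Fd dp]]]|F0]; [right|left].
  have [xp1 xp2] := (Fx _ Fd).2 p dp.
  exact: block_subset sF (subcoalgebra_e_supp sF Fd dp) xp1 xp2.
move=> d Fd; apply: functional_extensionality => p; apply/eqP/negPn/negP => dp.
by apply: F0; exists d, p.
Qed.

(* A simple D containing some e_{a,b} contains the block of a; simplicity forces
   D = block a, so b lies in the class of a. *)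
Lemma simple_subcoalgebra_supp D c p :
  simple_subcoalgebra le D -> D c -> c p != 0 -> le p.2 p.1.
Proof.
case=> sD _ Hsimple Dc cp; have /= lp := IC_le (subcoalgebra_IC sD Dc) cp.
have Dp := subcoalgebra_e_supp sD Dc cp.
have [_ Dp1] := subcoalgebra_e_interval sD Dp (le_refl p.1) lp.
have p1p1 : equiv p.1 p.1 by split.
case: (Hsimple _ (block_subcoalgebra p.1) (block_subset sD Dp1 p1p1 p1p1)) => [B0|DB].
  by case: (@e_neq0 p.1 p.1); apply: B0; apply: block_e.
have ep : e p.1 p.2 (p.1, p.2) != 0 by rewrite e_id oner_eq0.
by have [_ []] := (DB _ Dp).2 _ ep.
Qed.

Lemma coradicalE c : coradical le c <-> supp_in (fun p => le p.2 p.1) c.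
Proof.
split.
  apply: span_subset_subspace; first exact: supp_in_subspace.
  move=> g [D [sD Dg]]; split.
    by case: sD => sD _ _; apply: (subcoalgebra_IC sD Dg).
  by move=> p; apply: simple_subcoalgebra_supp sD Dg.
case=> Ic Hc; case: (IC_expand Ic) => s [_ Hs _ ->].
apply: subspace_lincomb_seq; first exact: span_subspace.
apply: all_vecs_map => p /Hs cp /=; apply: span_mem; exists (block p.1).
by split; [exact: block_simple | apply: block_e; split => //; [apply: IC_le cp | apply: Hc]].
Qed.

Fixpoint filt_supp (n : nat) (p : X * X) : Prop :=
  if n is n'.+1 then forall z, le p.1 z -> le z p.2 -> le z p.1 \/ filt_supp n' (z, p.2)
  else le p.2 p.1.

Section FiltrationStep.
Variable n : nat.
Hypothesis corad_filt_nE : forall c, corad_filt le n c <-> supp_in (filt_supp n) c.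

(* Compare the coefficients of e_{a,z} (x) e_{z,b} on both sides of Delta c = u + v. *)
Lemma wedge_supp c : wedge le (coradical le) (corad_filt le n) c -> supp_in (filt_supp n.+1) c.
Proof.
case=> Ic [u [v [Hu [Hv DeltaE]]]]; split => // p cp z l1 l2.
case: (boolP (le z p.1)) => [|nzp]; [by left | right].
apply: NNPP => nP; move/(congr1 (fun f => f ((p.1, z), (z, p.2)))): DeltaE.
rewrite /Delta /= eqxx l1 l2 /= -surjective_pairing.
rewrite (tensS_eq0_l _ _ Hu); last first.
  move=> w /coradicalE [_ Hw]; apply/eqP/negPn/negP => /Hw /=.
  by rewrite (negbTE nzp).
rewrite (tensS_eq0_r _ _ Hv); last first.
  by move=> w /corad_filt_nE [_ Hw]; apply/eqP/negPn/negP => /Hw.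
by rewrite addr0 => /eqP; rewrite (negbTE cp).
Qed.

(* The terms of Delta c with z <= p.1 lie in C_0 (x) C, the others in C (x) C_n. *)
Lemma supp_wedge c : supp_in (filt_supp n.+1) c -> wedge le (coradical le) (corad_filt le n) c.
Proof.
case=> Ic Hc; split => //; case: (Delta_expand Ic) => s [T [Hs ->]].
set F := fun (P : X * X -> X -> bool) pq => \sum_(p <- s) \sum_(z <- T | P p z)
  c p * tens (e p.1 z) (e z p.2) pq.
exists (F (fun p z => (le p.1 z && le z p.2) && le z p.1)).
exists (F (fun p z => (le p.1 z && le z p.2) && ~~ le z p.1)).
split; [|split].
- apply: tensS_Delta_part => p z _ /andP [/andP [l1 l2] l3].
  by split; [apply/coradicalE; apply: supp_in_e | apply: IC_e].
- apply: tensS_Delta_part => p z ps /andP [/andP [l1 l2] l3].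
  split; first exact: IC_e.
  apply/corad_filt_nE; apply: supp_in_e => //.
  by case: (Hc p (Hs p ps) z l1 l2) => // zp; rewrite zp in l3.
- apply: functional_extensionality => pq; rewrite /F -big_split.
  by apply: eq_bigr => p _; rewrite (bigID (fun z => le z p.1)).
Qed.
End FiltrationStep.

Lemma corad_filtE n c : corad_filt le n c <-> supp_in (filt_supp n) c.
Proof.
elim: n c => [|n IH] c; first exact: coradicalE.
by split; [apply: wedge_supp | apply: supp_wedge].
Qed.

Lemma e_basis_coradical_basis : coradical_basis le (@e_basis k X le).
Proof.
have e_basis_supp c p : IC c -> c p != 0 -> e_basis le (e p.1 p.2).
  by move=> Ic cp; exists p.1, p.2; split => //; apply: IC_le cp.
split.
  apply: basis_of_e_supp => // [v [x [y [lxy ->]]]|c Ic p]; first exact: IC_e.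
  exact: e_basis_supp.
move=> n; apply: basis_of_e_supp => [c /corad_filtE []|c []|c []|] //.
move=> c /corad_filtE [Ic Hc] p cp; split; first exact: e_basis_supp cp.
apply/corad_filtE; apply: supp_in_e; first exact: IC_le cp.
by rewrite -surjective_pairing; apply: Hc.
Qed.
End IncidenceCoalgebra.

Theorem mainTheorem6 (k : fieldType) (X : eqType) (le : rel X)
  (le_refl : forall x, le x x)
  (le_trans : forall x y z, le x y -> le y z -> le x z)
  (loc_fin : forall x y, exists s : seq X, forall z, le x z && le z y -> z \in s) :
  @coradical_basis k X le (@e_basis k X le).
Proof. exact: e_basis_coradical_basis. Qed.
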